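(* Let $k \geq 2$ and $n \geq 1$ be integers, let $\Sigma_k = \{0,1,\ldots,k-1\}$, and let $\mathcal{D}$ be the set of primitive words in $\Sigma_k^n$. Consider the following procedure, which outputs symbols one at a time: (1) output $0^{n-1}$; (2) repeatedly, letting $x$ be the last $n-1$ symbols output so far, choose the largest $i \in \{0,\ldots,k-1\}$ such that $xi$ is primitive and $xi$ has not yet appeared as a factor of the word output so far, and output $i$; terminate when there is no such $i$. Then this procedure terminates and outputs a word of length $|\mathcal{D}| + n - 1$ that contains every primitive word in $\Sigma_k^n$ as a factor.
   Context: A word $w$ is primitive if there is no word $x$ and integer $p \geq 2$ with $w = x^p$. A factor (subword) of a word is a contiguous block of consecutive symbols. *)

From mathcomp Require Import all_boot.
Set Implicit Arguments. Unset Strict Implicit. Unset Printing Implicit Defensive.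

Definition word_over (k : nat) (w : seq nat) : Prop := all (fun a => a < k) w.

Definition primitive (w : seq nat) : Prop :=
  ~ (exists (x : seq nat) (p : nat), 2 <= p /\ w = flatten (nseq p x)).

Definition factor (u w : seq nat) : Prop := infix u w.

Definition lastsyms (n : nat) (s : seq nat) : seq nat := drop (size s - n.-1) s.

Definition valid (k n : nat) (s : seq nat) (i : nat) : Prop :=
  i < k /\ primitive (rcons (lastsyms n s) i) /\ ~ factor (rcons (lastsyms n s) i) s.

Definition greedy_step (k n : nat) (s s' : seq nat) : Prop :=
  exists i, valid k n s i /\ (forall j, valid k n s j -> j <= i) /\ s' = rcons s i.

Definition terminal (k n : nat) (s : seq nat) : Prop := forall i, ~ valid k n s i.

Inductive reachable (k n : nat) : seq nat -> Prop :=
| reach_start : reachable k n (nseq n.-1 0)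
| reach_step : forall s s', reachable k n s -> greedy_step k n s s' -> reachable k n s'.

From mathcomp Require Import all_boot zify.
Set Implicit Arguments. Unset Strict Implicit. Unset Printing Implicit Defensive.

(* Read the output as a trail in the graph whose vertices are the words of length n-1
   and whose edges are the primitive words of length n, the edge a y = x b going from
   x to y.  Primitivity is invariant under rotation, so in- and out-degrees agree, and
   a trail that started at 0^(n-1), never repeated an edge and got stuck must have
   returned to 0^(n-1) with every edge out of it used.  Because the largest symbol is
   always tried first, an unused edge x j forces the edge x 0 (when primitive) to be
   unused too, so an unsaturated vertex x makes the vertex behead (x 0) unsaturated.
   When x 0 is not primitive, a Fine-Wilf argument shows that the words
   drop t (x j) ++ 0^t are primitive, and the same propagation walks down to
   0^(n-1), a contradiction.  Hence every primitive word occurs, each exactly once. *)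

(** * Periodicity and the Fine-Wilf theorem *)

Lemma periodic_modn (f : nat -> nat) p L : 0 < p ->
  (forall i, i + p < L -> f i = f (i + p)) -> forall i, i < L -> f i = f (i %% p).
Proof.
move=> p_gt0 fp; elim/ltn_ind => i IH i_lt_L.
have [lt_ip|le_pi] := ltnP i p; first by rewrite modn_small.
rewrite -(subnK le_pi) modnDr -fp; rewrite ?subnK // IH //; lia.
Qed.

Lemma fine_wilf (f : nat -> nat) p q L : 0 < p -> 0 < q ->
  (forall i, i + p < L -> f i = f (i + p)) ->
  (forall i, i + q < L -> f i = f (i + q)) ->
  p + q - gcdn p q <= L -> forall i, i < L -> f i = f (i %% gcdn p q).
Proof.
have [s] := ubnP (p + q); elim: s p q L => // s IH p q L pq_lt_s p_gt0 q_gt0 fp fq L_ge.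
wlog le_pq : p q p_gt0 q_gt0 fp fq L_ge pq_lt_s / p <= q => [W|].
  have [|lt_qp] := leqP p q; first exact: W.
  rewrite gcdnC; apply: W => //; last exact: ltnW.
    by rewrite gcdnC addnC.
  by rewrite addnC.
have [lt_pq|] := ltnP p q; last first.
  move=> le_qp; have eq_pq : p = q by lia.
  by rewrite -eq_pq gcdnn; apply: periodic_modn.
have gcd_sub : gcdn p (q - p) = gcdn p q by rewrite -gcdnDr subnK // ltnW.
have g_le : gcdn p q <= q - p.
  by rewrite -gcd_sub dvdn_leq ?dvdn_gcdr //; lia.
have f_short : forall i, i < L - p -> f i = f (i %% gcdn p q).
  rewrite -gcd_sub; apply: IH; rewrite ?subn_gt0 //; first lia.
  - by move=> i hi; apply: fp; lia.
  - by move=> i hi; rewrite fq ?(fp (i + (q - p))); [congr f|..]; lia.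
  - rewrite gcd_sub; lia.
have g_gt0 : 0 < gcdn p q by rewrite gcdn_gt0 p_gt0.
move=> i i_lt_L; rewrite (periodic_modn p_gt0 fp i_lt_L) f_short.
  by rewrite modn_dvdm // dvdn_gcdl.
have := ltn_pmod i p_gt0; lia.
Qed.

Lemma periodic_dvdn (f : nat -> nat) d l : (forall i, f (i + d) = f i) -> d %| l ->
  forall i, f (i + l) = f i.
Proof.
move=> fd /dvdnP[j ->]; elim: j => [|j IH] i; first by rewrite mul0n addn0.
by rewrite mulSn addnA IH fd.
Qed.

Lemma modn_sub_dvdn g e x : g %| e -> e <= x -> (x - e) %% g = x %% g.
Proof. by move=> /dvdnP[y ->] le_ex; rewrite -{2}(subnK le_ex) addnC modnMDl. Qed.

Lemma proper_dvdn_double d n : d %| n -> d < n -> d.*2 <= n.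
Proof. move=> /dvdnP[q ->] lt_dn; have : 1 < q by nia. nia. Qed.

Lemma lcmn_proper_dvdn_bound d e n : 0 < d -> 0 < e -> d < n -> e < n ->
  lcmn d e = n -> d + e - gcdn d e + minn d e <= n.
Proof.
move=> d_gt0 e_gt0 lt_dn lt_en lcm_de.
have ne_de : d != e.
  by apply: contraTneq lt_dn => eq_de; rewrite -lcm_de eq_de (lcmn_idPl (dvdnn e)) ltnn.
have n_g : n * gcdn d e = d * e by rewrite -lcm_de muln_lcm_gcd.
have g_gt0 : 0 < gcdn d e by rewrite gcdn_gt0 d_gt0.
move: (dvdn_gcdl d e) (dvdn_gcdr d e) n_g g_gt0 ne_de lt_dn lt_en.
move: (gcdn d e) => g /dvdnP[a ->] /dvdnP[b ->] n_g g_gt0 ne_ab lt_dn lt_en.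
have n_eq : n = a * b * g by apply/eqP; rewrite -(eqn_pmul2r g_gt0) n_g; apply/eqP; nia.
have a_gt1 : 1 < a by nia.
have b_gt1 : 1 < b by nia.
have [lt_ab|lt_ba|eq_ab] := ltngtP a b; last by rewrite eq_ab eqxx in ne_ab.
- have : 0 < (a - 1) * (b - 2) by rewrite muln_gt0; lia.
  nia.
- have : 0 < (b - 1) * (a - 2) by rewrite muln_gt0; lia.
  nia.
Qed.

(* The key configuration of the Fine-Wilf argument: X reads the non-primitive word
   x 0 cyclically (period d), c reads a rotation of drop t (x m) ++ 0^t (period e). *)
Section PeriodicPerturbation.

Variables (n d e t : nat) (X c : nat -> nat).
Hypotheses (d_gt0 : 0 < d) (lt_dn : d < n) (dvd_dn : d %| n).
Hypotheses (e_gt0 : 0 < e) (lt_en : e < n) (dvd_en : e %| n).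
Hypothesis X_periodic : forall i, X (i + d) = X i.
Hypothesis c_periodic : forall i, c (i + e) = c i.
Hypotheses (t_gt0 : 0 < t) (lt_tn : t < n).
Hypothesis c_prefix : forall i, i < t -> c i = 0.
Hypothesis c_middle : forall i, t <= i -> i < n.-1 -> c i = X i.
Hypothesis c_last : c n.-1 != 0.
Hypothesis X_last : X n.-1 = 0.

Let e_double : e.*2 <= n. Proof. exact: proper_dvdn_double. Qed.
Let d_double : d.*2 <= n. Proof. exact: proper_dvdn_double. Qed.

Let c_pred_e : c e.-1 = c n.-1.
Proof.
have -> : n.-1 = e.-1 + (n - e) by lia.
by rewrite (periodic_dvdn c_periodic) // dvdn_sub.
Qed.

Let lt_te : t < e.
Proof.
by rewrite ltnNge; apply: contra c_last => le_et; rewrite -c_pred_e c_prefix //; lia.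
Qed.

Let lt_td : t < d.
Proof.
rewrite ltnNge; apply/negP => le_dt.
have X_e : X e.-1 = c n.-1 by rewrite -c_pred_e c_middle //; lia.
have : X (d.-1 + e) = 0 by rewrite -c_middle ?c_periodic ?c_prefix //; lia.
have -> : d.-1 + e = e.-1 + d by lia.
by rewrite X_periodic X_e => c0; move: c_last; rewrite c0.
Qed.

Let lcm_de : lcmn d e = n.
Proof.
set l := lcmn d e; have l_gt0 : 0 < l by rewrite lcmn_gt0 d_gt0.
have dvd_ln : l %| n by rewrite dvdn_lcm dvd_dn.
have le_el : e <= l by rewrite dvdn_leq // dvdn_lcmr.
have [lt_ln|] := ltnP l n; last by move=> le_nl; apply/eqP; rewrite eqn_leq le_nl dvdn_leq //; lia.
have l_double := proper_dvdn_double dvd_ln lt_ln.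
have X_shift : X (n.-1 - l) = X n.-1.
  by rewrite -(periodic_dvdn X_periodic (dvdn_lcml d e)) subnK //; lia.
have c_shift : c (n.-1 - l) = c n.-1.
  by rewrite -(periodic_dvdn c_periodic (dvdn_lcmr d e)) subnK //; lia.
by move: c_last; rewrite -c_shift c_middle ?X_shift ?X_last //; lia.
Qed.

Lemma periodic_perturbation_absurd : False.
Proof.
set g := gcdn d e; set L := n.-1 - t.
have len_L : d + e - g <= L.
  have := lcmn_proper_dvdn_bound d_gt0 e_gt0 lt_dn lt_en lcm_de; rewrite -/g; lia.
pose f i := X (t + i).
have f_d : forall i, i + d < L -> f i = f (i + d) by move=> i _; rewrite /f addnA X_periodic.
have f_e : forall i, i + e < L -> f i = f (i + e).
  by move=> i lt_iL; rewrite /f addnA -!c_middle ?c_periodic //; lia.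
have f_mod := fine_wilf d_gt0 e_gt0 f_d f_e len_L.
have c_f : c n.-1 = f (L - e).
  have -> : n.-1 = t + (L - e) + e by lia.
  by rewrite c_periodic c_middle //; lia.
have X_f : X n.-1 = f (L - d).
  have -> : n.-1 = t + (L - d) + d by lia.
  by rewrite X_periodic.
have f_Led : f (L - e) = f (L - d).
  rewrite (f_mod (L - e)) ?(f_mod (L - d)); try lia.
  by rewrite (@modn_sub_dvdn _ e L) ?(@modn_sub_dvdn _ d L) ?dvdn_gcdl ?dvdn_gcdr //; lia.
by move: c_last; rewrite c_f f_Led -X_f X_last.
Qed.

End PeriodicPerturbation.

(** * Primitive words *)

Lemma size_flatten_nseq p (x : seq nat) : size (flatten (nseq p x)) = p * size x.
Proof. by elim: p => //= p IH; rewrite size_cat IH mulSn. Qed.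

Lemma nth_flatten_nseq p (x : seq nat) i : i < p * size x ->
  nth 0 (flatten (nseq p x)) i = nth 0 x (i %% size x).
Proof.
elim: p i => [|p IH] i; first by rewrite mul0n.
rewrite mulSn /= nth_cat => lt_i.
have [lt_ix|le_xi] := ltnP i (size x); first by rewrite modn_small.
rewrite IH; last lia.
by rewrite -{2}(subnK le_xi) modnDr.
Qed.

Definition primitiveb (w : seq nat) : bool :=
  (w != [::]) && ~~ has (fun d => (d %| size w) && (w == flatten (nseq (size w %/ d) (take d w))))
                        (iota 1 (size w).-1).

Lemma primitiveP w : reflect (primitive w) (primitiveb w).
Proof.
apply: (iffP idP) => [/andP[/eqP w_ne /hasPn no_root] [x [p [p_ge2 w_eq]]]|prim_w].
  have size_w : size w = p * size x by rewrite w_eq size_flatten_nseq.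
  have x_gt0 : 0 < size x.
    by case: posnP => // x0; case: w_ne; apply/size0nil; rewrite size_w x0 muln0.
  have take_x : take (size x) w = x.
    by rewrite w_eq; case: p p_ge2 {w_eq size_w} => // p _; rewrite /= take_size_cat.
  have root_x : size x \in iota 1 (size w).-1 by rewrite mem_iota x_gt0 /=; nia.
  by move: (no_root _ root_x); rewrite take_x size_w mulnK // dvdn_mull // -w_eq eqxx.
apply/andP; split.
  by apply/eqP => w_nil; apply: prim_w; exists [::], 2; rewrite w_nil.
apply/hasPn => d; rewrite mem_iota => /andP[d_gt0 lt_dw].
apply/negP => /andP[/dvdnP[q size_q] /eqP w_eq]; apply: prim_w.
exists (take d w), (size w %/ d); split => //.
by rewrite size_q mulnK //; nia.
Qed.

Lemma nonprimitive_period w : ~ primitive w -> 0 < size w ->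
  exists2 e, [&& 0 < e, e < size w & e %| size w] &
    forall i, nth 0 w ((i + e) %% size w) = nth 0 w (i %% size w).
Proof.
move=> /primitiveP; rewrite negb_and !negbK => /orP[/eqP -> //|/hasP[d]].
rewrite mem_iota => /andP[d_gt0 lt_dw] /andP[dvd_dw /eqP w_eq] w_gt0.
exists d; first by rewrite d_gt0 dvd_dw; lia.
have size_d : size (take d w) = d by rewrite size_take; case: ltnP; lia.
have nth_mod i : nth 0 w (i %% size w) = nth 0 (take d w) (i %% d).
  rewrite {1}w_eq nth_flatten_nseq size_d ?modn_dvdm ?divnK ?ltn_mod //.
by move=> i; rewrite !nth_mod modnDr.
Qed.

Lemma flatten_nseq_cat_rot p (u v : seq nat) :
  flatten (nseq p (u ++ v)) ++ u = u ++ flatten (nseq p (v ++ u)).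
Proof. by elim: p => [|p IH] /=; rewrite ?cats0 // -catA IH !catA. Qed.

Lemma primitive_cons_rcons a (y : seq nat) : primitive (a :: y) <-> primitive (rcons y a).
Proof.
have flatten_nil p : flatten (nseq p ([::] : seq nat)) = [::] by elim: p.
split=> prim_w [x [p [p_ge2 w_eq]]]; apply: prim_w.
- case/lastP: x w_eq => [|x b] w_eq; first by case: y w_eq; rewrite flatten_nil.
  have := flatten_nseq_cat_rot p [:: b] x.
  rewrite /= !cats1 -w_eq -rcons_cons => /rcons_inj[pow_eq <-].
  by exists (b :: x), p; rewrite pow_eq.
- case: x w_eq => [|b x] w_eq; first by rewrite flatten_nil in w_eq.
  have := flatten_nseq_cat_rot p [:: b] x.
  rewrite /= -w_eq cats1 /= => -[-> ->].
  by exists (rcons x b), p; rewrite -cats1.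
Qed.

Lemma primitive_drop_rcons_nseq0 (x : seq nat) m t :
  ~ primitive (rcons x 0) -> m != 0 -> 0 < t <= size x ->
  primitive (drop t (rcons x m) ++ nseq t 0).
Proof.
move=> nprim_x0 m_neq0 /andP[t_gt0 le_tx] w_power.
set n := (size x).+1; set w := drop t (rcons x m) ++ nseq t 0 in w_power.
have size_x0 : size (rcons x 0) = n by rewrite size_rcons.
have size_w : size w = n by rewrite size_cat size_drop size_nseq size_rcons; lia.
have size_dw : size (drop t (rcons x m)) = n - t by rewrite size_drop size_rcons.
have x0_gt0 : 0 < size (rcons x 0) by rewrite size_x0.
have w_gt0 : 0 < size w by rewrite size_w.
have [d /and3P[d_gt0 lt_dn dvd_dn] x0_periodic] := nonprimitive_period nprim_x0 x0_gt0.
have [e /and3P[e_gt0 lt_en dvd_en] w_periodic] :=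
  nonprimitive_period (fun prim_w => prim_w w_power) w_gt0.
rewrite size_x0 in lt_dn dvd_dn x0_periodic; rewrite size_w in lt_en dvd_en w_periodic.
pose X i := nth 0 (rcons x 0) (i %% n).
pose c i := nth 0 w ((i + n - t) %% n).
have c_suffix i : t <= i < n -> c i = nth 0 (rcons x m) i.
  move=> /andP[le_ti lt_in]; rewrite /c; have -> : i + n - t = i - t + n by lia.
  rewrite modnDr modn_small ?nth_cat ?size_dw ?ifT ?nth_drop ?subnKC //; lia.
apply: (@periodic_perturbation_absurd n d e t X c) => //.
- by move=> i; rewrite /c (_ : i + e + n - t = i + n - t + e) ?w_periodic //; lia.
- move=> i lt_it; rewrite /c modn_small ?nth_cat ?size_dw; last by lia.
  by rewrite ifF ?nth_nseq; [case: ifP | lia].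
- move=> i le_ti lt_in; rewrite c_suffix ?le_ti /X ?modn_small ?nth_rcons; try lia.
  by rewrite !ifT //; lia.
- by rewrite c_suffix ?nth_rcons /n /= ?ltnn ?eqxx //; lia.
- by rewrite /X modn_small ?nth_rcons /n /= ?ltnn ?eqxx.
Qed.

(** * The greedy procedure *)

Fixpoint words (k n : nat) : seq (seq nat) :=
  if n is n'.+1 then [seq a :: w | a <- iota 0 k, w <- words k n'] else [:: [::]].

Lemma mem_words k n w : (w \in words k n) = (size w == n) && all (fun a => a < k) w.
Proof.
elim: n w => [|n IH] [|a w] //=.
  by apply/negbTE/allpairsP => -[[b v] [_ _]].
apply/allpairsP/idP => [[[b v] /= [b_k v_n [-> ->]]]|/andP[/eqP[size_w] /andP[a_k w_k]]].
  by move: b_k v_n; rewrite mem_iota IH => /= -> /andP[/eqP -> ->]; rewrite eqxx.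
by exists (a, w); rewrite /= mem_iota IH size_w eqxx.
Qed.

Lemma uniq_words k n : uniq (words k n).
Proof.
elim: n => //= n IH; apply: allpairs_uniq; rewrite ?iota_uniq //.
by move=> [a1 w1] [a2 w2] _ _ /= [-> ->].
Qed.

Lemma count_predU1 (T : eqType) (P : pred T) a (s : seq T) : uniq s -> ~~ P a ->
  count (fun z => P z || (z == a)) s = count P s + (a \in s).
Proof.
move=> uniq_s Pa; have PIa0 : count (predI P (pred1 a)) s = 0.
  apply/eqP; rewrite -leqn0 -(count_pred0 s) sub_count // => z /andP[Pz /eqP za].
  by rewrite -za Pz in Pa.
by have := count_predUI P (pred1 a) s; rewrite PIa0 addn0 (count_uniq_mem a uniq_s).
Qed.

Lemma sub_in_count (T : eqType) (P Q : pred T) s : {in s, forall z, P z -> Q z} ->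
  count P s <= count Q s.
Proof.
elim: s => //= b s IH PQ; rewrite leq_add ?IH // => [|z z_s].
  by case: (boolP (P b)) => // /(PQ b (mem_head b s)) ->.
by apply: PQ; rewrite in_cons z_s orbT.
Qed.

Lemma sub_in_count_ltn (T : eqType) (P Q : pred T) s a : {in s, forall z, P z -> Q z} ->
  a \in s -> Q a -> ~~ P a -> count P s < count Q s.
Proof.
elim: s => //= b s IH PQ; have PQs : {in s, forall z, P z -> Q z}.
  by move=> z z_s; apply: PQ; rewrite in_cons z_s orbT.
have le_b : P b <= Q b by case: (boolP (P b)) => // /(PQ b (mem_head b s)) ->.
rewrite in_cons => /orP[/eqP <-|a_s] Qa Pa.
  by rewrite (negbTE Pa) Qa add0n add1n ltnS sub_in_count.
by have := IH PQs a_s Qa Pa; lia.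
Qed.

Lemma infix_small (w s : seq nat) : size s < size w -> infix w s = false.
Proof. by move=> lt_sw; apply: contraTF lt_sw => /size_infix; rewrite ltnNge => ->. Qed.

Lemma word_over_drop k t s : word_over k s -> word_over k (drop t s).
Proof. by rewrite /word_over -{1}(cat_take_drop t s) all_cat => /andP[]. Qed.

Lemma rcons_nseq (T : Type) m (a : T) : rcons (nseq m a) a = nseq m.+1 a.
Proof. by elim: m => //= m ->. Qed.

Section GreedyPrimitive.

Variables k n : nat.
Hypotheses (k_gt1 : 1 < k) (n_gt0 : 0 < n).

Definition zeros := nseq n.-1 0.
Definition primitive_words := filter primitiveb (words k n).
Definition in_edges (x : seq nat) := [seq j :: x | j <- iota 0 k].
Definition out_edges (x : seq nat) := [seq rcons x j | j <- iota 0 k].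
Definition indeg (s x : seq nat) := count (fun w => infix w s) (in_edges x).
Definition outdeg (s x : seq nat) := count (fun w => infix w s) (out_edges x).
Definition degree (x : seq nat) := count primitiveb (out_edges x).
Definition saturated (s x : seq nat) := all (fun w => primitiveb w ==> infix w s) (out_edges x).

Record greedy_inv (s : seq nat) : Prop := GreedyInv {
  greedy_word : word_over k s;
  greedy_size : n.-1 <= size s;
  greedy_factor : forall w, size w = n -> infix w s -> primitive w;
  greedy_max : forall x j j', size x = n.-1 -> infix (rcons x j) s -> j < j' < k ->
    primitive (rcons x j') -> infix (rcons x j') s;
  greedy_balance : forall x, size x = n.-1 ->
    indeg s x + (x == zeros) = outdeg s x + (x == lastsyms n s);
  greedy_length : size s = n.-1 + count (fun w => infix w s) primitive_words }.

Lemma mem_primitive_words w :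
  w \in primitive_words <-> size w = n /\ word_over k w /\ primitive w.
Proof.
rewrite mem_filter mem_words; split => [/and3P[/primitiveP prim_w /eqP size_w word_w]|] //.
by move=> [-> [word_w /primitiveP ->]]; rewrite eqxx.
Qed.

Lemma uniq_primitive_words : uniq primitive_words.
Proof. exact/filter_uniq/uniq_words. Qed.

Lemma mem_in_edges x a y : (a :: y \in in_edges x) = (a < k) && (y == x).
Proof.
apply/mapP/andP => [[j]|[a_k /eqP ->]]; last by exists a; rewrite ?mem_iota.
by rewrite mem_iota => /andP[_ j_k] [-> ->].
Qed.

Lemma mem_out_edges x y a : (rcons y a \in out_edges x) = (a < k) && (y == x).
Proof.
apply/mapP/andP => [[j]|[a_k /eqP ->]]; last by exists a; rewrite ?mem_iota.
by rewrite mem_iota => /andP[_ j_k] /rcons_inj[-> ->].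
Qed.

Lemma uniq_in_edges x : uniq (in_edges x).
Proof. by rewrite map_inj_uniq ?iota_uniq // => i j []. Qed.

Lemma uniq_out_edges x : uniq (out_edges x).
Proof. by rewrite map_inj_uniq ?iota_uniq // => i j /rcons_inj[]. Qed.

Lemma size_in_edges x : size x = n.-1 -> {in in_edges x, forall w, size w = n}.
Proof. by move=> size_x _ /mapP[j _ ->] /=; rewrite size_x; lia. Qed.

Lemma size_out_edges x : size x = n.-1 -> {in out_edges x, forall w, size w = n}.
Proof. by move=> size_x _ /mapP[j _ ->]; rewrite size_rcons size_x; lia. Qed.

Lemma count_primitive_in_edges x : count primitiveb (in_edges x) = degree x.
Proof.
rewrite /degree !count_map; apply: eq_count => j /=.
by apply/primitiveP/primitiveP => /primitive_cons_rcons.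
Qed.

Lemma size_lastsyms s : n.-1 <= size s -> size (lastsyms n s) = n.-1.
Proof. by move=> le_ns; rewrite /lastsyms size_drop; lia. Qed.


Lemma lastsyms_rcons s i : n.-1 <= size s ->
  lastsyms n (rcons s i) = behead (rcons (lastsyms n s) i).
Proof.
move=> le_ns; rewrite /lastsyms size_rcons -drop_rcons ?leq_subr // -drop1 drop_drop.
by congr drop; lia.
Qed.

Lemma infix_rcons_edge s i w : n.-1 <= size s -> size w = n ->
  infix w (rcons s i) = infix w s || (w == rcons (lastsyms n s) i).
Proof.
move=> le_ns size_w; rewrite infix_rconsl orbC suffixE size_rcons size_w.
by rewrite /lastsyms -drop_rcons ?leq_subr // eq_sym (_ : _.+1 - n = size s - n.-1) //; lia.
Qed.

Lemma count_infix_rcons s i L : n.-1 <= size s -> uniq L -> {in L, forall w, size w = n} ->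
  ~~ infix (rcons (lastsyms n s) i) s ->
  count (fun w => infix w (rcons s i)) L =
    count (fun w => infix w s) L + (rcons (lastsyms n s) i \in L).
Proof.
move=> le_ns uniq_L size_L new_i; rewrite -count_predU1 //.
by apply: eq_in_count => w /size_L; apply: infix_rcons_edge.
Qed.

Lemma greedy_inv_start : greedy_inv zeros.
Proof.
have size_z : size zeros = n.-1 by rewrite size_nseq.
have no_edge w : size w = n -> infix w zeros = false.
  by move=> size_w; rewrite infix_small // size_z size_w; lia.
have no_count (L : seq (seq nat)) :
    {in L, forall w, size w = n} -> count (fun w => infix w zeros) L = 0.
  by move=> size_L; rewrite (eq_in_count (a2 := pred0)) ?count_pred0 // => w /size_L /no_edge.
split; rewrite ?size_z //.
- by rewrite /word_over all_nseq; apply/orP; right; lia.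
- by move=> w /no_edge ->.
- by move=> x j j' size_x; rewrite no_edge // size_rcons size_x; lia.
- move=> x size_x.
  rewrite /indeg /outdeg (no_count _ (size_in_edges size_x)) (no_count _ (size_out_edges size_x)).
  by rewrite /lastsyms size_z subnn drop0.
- by rewrite (no_count primitive_words) ?addn0 // => w /mem_primitive_words[].
Qed.

Lemma greedy_inv_step s s' : greedy_inv s -> greedy_step k n s s' -> greedy_inv s'.
Proof.
move=> [word_s size_s factor_s max_s balance_s length_s].
move=> [i [[i_k [prim_ui /negP new_ui]] [i_max ->]]].
set u := lastsyms n s in prim_ui new_ui i_max *.
have size_u : size u = n.-1 by apply: size_lastsyms.
have size_ui : size (rcons u i) = n by rewrite size_rcons size_u; lia.
have infix_rcons w : size w = n -> infix w (rcons s i) = infix w s || (w == rcons u i).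
  exact: infix_rcons_edge.
have count_rcons := count_infix_rcons size_s _ _ new_ui.
split.
- by rewrite /word_over all_rcons i_k.
- by rewrite size_rcons; lia.
- by move=> w size_w; rewrite infix_rcons // => /orP[/(factor_s _ size_w)|/eqP ->].
- move=> x j j' size_x; have size_xj l : size (rcons x l) = n by rewrite size_rcons size_x; lia.
  rewrite !infix_rcons // => /orP[xj_s|/eqP/rcons_inj[-> ->]] lt_jj' prim_xj'.
    by rewrite (max_s x j j').
  apply/orP; left; apply: contraT => /negP new_uj'; case/andP: lt_jj' => lt_ij' j'_k.
  by have := i_max j' (conj j'_k (conj prim_xj' new_uj')); lia.
- move=> x size_x; rewrite lastsyms_rcons //.
  have head_ui : head i u < k.
    have : word_over k u := word_over_drop _ word_s.
    by case: (u) => [|a ?] //= /andP[].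
  have in_x : indeg (rcons s i) x = indeg s x + (x == behead (rcons u i)).
    rewrite /indeg (count_rcons _ (uniq_in_edges x) (size_in_edges size_x)).
    by rewrite (headI u i) mem_in_edges -headI head_ui eq_sym.
  have out_x : outdeg (rcons s i) x = outdeg s x + (x == u).
    rewrite /outdeg (count_rcons _ (uniq_out_edges x) (size_out_edges size_x)).
    by rewrite mem_out_edges i_k eq_sym.
  by have := balance_s x size_x; rewrite in_x out_x -/u; lia.
- have size_D : {in primitive_words, forall w, size w = n} by move=> w /mem_primitive_words[].
  rewrite size_rcons length_s (count_rcons _ uniq_primitive_words size_D).
  have -> : rcons u i \in primitive_words.
    apply/mem_primitive_words; split => //; split => //.
    by rewrite /word_over all_rcons i_k; exact: word_over_drop.
  by rewrite addn1 addnS.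
Qed.

Lemma greedy_inv_reachable s : reachable k n s -> greedy_inv s.
Proof.
by elim=> [|? ? _ inv_s step_s]; [exact: greedy_inv_start | exact: greedy_inv_step step_s].
Qed.

Lemma greedy_step_or_terminal s : terminal k n s \/ exists s', greedy_step k n s s'.
Proof.
set u := lastsyms n s.
pose validb i := [&& i < k, primitiveb (rcons u i) & ~~ infix (rcons u i) s].
have validP i : reflect (valid k n s i) (validb i).
  by apply: (iffP and3P) => [[? /primitiveP ? /negP ?]|[? [/primitiveP ? /negP ?]]].
have [/hasP[i _ /validP valid_i]|/hasPn no_valid] := boolP (has validb (iota 0 k)); last first.
  left=> i valid_i; have [i_k _] := valid_i.
  by move: (no_valid i); rewrite mem_iota i_k => /(_ isT) /validP.
right; have ex_valid : exists i, validb i by exists i; apply/validP.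
have validb_le j : validb j -> j <= k by case/and3P => /ltnW.
have [im /validP valid_im im_max] := ex_maxnP ex_valid validb_le.
by exists (rcons s im), im; split=> //; split=> // j /validP /im_max.
Qed.

Lemma greedy_terminates : exists s, reachable k n s /\ terminal k n s.
Proof.
have size_le s : reachable k n s -> size s <= n.-1 + size primitive_words.
  by move=> /greedy_inv_reachable inv_s; rewrite (greedy_length inv_s) leq_add2l count_size.
suff term_from : forall s, reachable k n s -> exists s', reachable k n s' /\ terminal k n s'.
  exact: term_from (reach_start k n).
move=> s; have [m] := ubnP (n.-1 + size primitive_words - size s).
elim: m s => // m IH s bound_s reach_s.
have [term_s|[s' step_s]] := greedy_step_or_terminal s; first by exists s.
have reach_s' := reach_step reach_s step_s.
apply: (IH s') => //; move: (size_le s' reach_s').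
by case: step_s => i [_ [_ ->]]; rewrite size_rcons; lia.
Qed.

Section Terminal.

Variable s : seq nat.
Hypotheses (inv_s : greedy_inv s) (term_s : terminal k n s).

Lemma indeg_le_degree x : size x = n.-1 -> indeg s x <= degree x.
Proof.
move=> size_x; rewrite -count_primitive_in_edges; apply: sub_in_count => w w_x /=.
by move=> /(greedy_factor inv_s (size_in_edges size_x w_x))/primitiveP.
Qed.

Lemma outdeg_saturated x : size x = n.-1 -> saturated s x -> outdeg s x = degree x.
Proof.
move=> size_x /allP sat_x; apply: eq_in_count => w w_x /=; apply/idP/idP.
  by move=> /(greedy_factor inv_s (size_out_edges size_x w_x))/primitiveP.
by move/implyP: (sat_x w w_x).
Qed.

Lemma saturated_lastsyms : saturated s (lastsyms n s).
Proof.
apply/allP => _ /mapP[j j_k ->]; apply/implyP => /primitiveP prim_j.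
apply: contraT => /negP new_j; case: (@term_s j); split=> //.
by move: j_k; rewrite mem_iota.
Qed.

Lemma lastsyms_terminal : lastsyms n s = zeros.
Proof.
have size_u := size_lastsyms (greedy_size inv_s).
have := greedy_balance inv_s size_u; rewrite eqxx.
rewrite (outdeg_saturated size_u saturated_lastsyms).
by have := indeg_le_degree size_u; case: eqP => //; lia.
Qed.

Lemma saturated_zeros : saturated s zeros.
Proof. by rewrite -lastsyms_terminal; exact: saturated_lastsyms. Qed.

Lemma unsaturated_behead w : size w = n -> word_over k w -> primitive w -> ~~ infix w s ->
  ~~ saturated s (behead w).
Proof.
move=> size_w word_w prim_w new_w; set y := behead w.
have size_y : size y = n.-1 by rewrite size_behead size_w.
have w_y : w \in in_edges y.
  move: size_w word_w; rewrite /y; case: (w) => [|a y'] /=; first lia.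
  by move=> _ /andP[a_k _]; rewrite mem_in_edges a_k eqxx.
have lt_in_deg : indeg s y < degree y.
  rewrite -count_primitive_in_edges; apply: (sub_in_count_ltn _ w_y) => //=; last exact/primitiveP.
  by move=> z z_y /(greedy_factor inv_s (size_in_edges size_y z_y))/primitiveP.
apply: contraTN lt_in_deg => sat_y; rewrite -leqNgt.
have := greedy_balance inv_s size_y; rewrite lastsyms_terminal (outdeg_saturated size_y sat_y).
lia.
Qed.

Lemma unsaturated_shift0 x : size x = n.-1 -> word_over k x -> ~~ saturated s x ->
  primitive (rcons x 0) -> ~~ saturated s (behead (rcons x 0)).
Proof.
move=> size_x word_x unsat_x prim_x0; have size_x0 : size (rcons x 0) = n.
  by rewrite size_rcons size_x; lia.
apply: unsaturated_behead => //.
  by rewrite /word_over all_rcons; apply/andP; split; [lia | exact: word_x].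
apply: contra unsat_x => x0_s; apply/allP => w /mapP[j]; rewrite mem_iota => j_k ->.
apply/implyP => /primitiveP prim_xj; case: j j_k prim_xj => // j j_k prim_xj.
exact: (greedy_max inv_s size_x x0_s).
Qed.

Lemma unsaturated_zeros x j : size x = n.-1 -> word_over k x -> ~ primitive (rcons x 0) ->
  0 < j < k -> primitive (rcons x j) -> ~~ infix (rcons x j) s -> ~~ saturated s zeros.
Proof.
move=> size_x word_x nprim_x0 /andP[j_gt0 j_k] prim_xj new_xj.
have word_xj : word_over k (rcons x j) by rewrite /word_over all_rcons j_k.
pose z t := drop t (rcons x j) ++ nseq t.-1 0.
have size_z t : 0 < t <= n -> size (z t) = n.-1.
  by move=> /andP[t_gt0 le_tn]; rewrite size_cat size_drop size_rcons size_x size_nseq; lia.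
have word_z t : word_over k (z t).
  rewrite /word_over all_cat all_nseq (word_over_drop t word_xj) /=.
  by apply/orP; right; lia.
have unsat_z t : 0 < t <= n -> ~~ saturated s (z t).
  elim: t => // t IH /andP[_ le_tn].
  have [-> | t_gt0] := posnP t.
    rewrite /z cats0 drop1; apply: unsaturated_behead => //.
    by rewrite size_rcons size_x; lia.
  have size_zt : size (z t) = n.-1 by apply: size_z; lia.
  have unsat_zt : ~~ saturated s (z t) by apply: IH; lia.
  have z0 : rcons (z t) 0 = drop t (rcons x j) ++ nseq t 0.
    by rewrite /z rcons_cat rcons_nseq prednK.
  have prim_z0 : primitive (rcons (z t) 0).
    by rewrite z0; apply: primitive_drop_rcons_nseq0; rewrite ?t_gt0 ?size_x //; lia.
  have := unsaturated_shift0 size_zt (word_z t) unsat_zt prim_z0.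
  by rewrite z0 (drop_nth 0) ?size_rcons ?size_x //; lia.
have := unsat_z n; rewrite /z drop_oversize ?size_rcons ?size_x; last lia.
by apply; lia.
Qed.

Lemma saturated_terminal x : size x = n.-1 -> word_over k x -> saturated s x.
Proof.
suff sat_drop h y : size y = n.-1 -> word_over k y -> drop h y = nseq (n.-1 - h) 0 ->
    saturated s y.
  by move=> size_x word_x; apply: (sat_drop n.-1) => //; rewrite drop_oversize ?size_x ?subnn.
elim: h y => [|h IH] y size_y word_y; first by rewrite drop0 subn0 => ->; exact: saturated_zeros.
move=> drop_y; have [le_nh|lt_hn] := leqP n.-1 h.
  by apply: IH; rewrite // drop_oversize ?size_y // (_ : n.-1 - h = 0) //; lia.
apply: contraT => unsat_y.
have [/primitiveP prim_y0|/primitiveP nprim_y0] := boolP (primitiveb (rcons y 0)).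
  case/negP: (unsaturated_shift0 size_y word_y unsat_y prim_y0); apply: IH.
  - by rewrite size_behead size_rcons size_y.
  - rewrite -drop1; apply: word_over_drop.
    by rewrite /word_over all_rcons; apply/andP; split; [lia | exact: word_y].
  - rewrite -drop1 drop_drop addn1 drop_rcons ?size_y // drop_y rcons_nseq.
    by congr nseq; lia.
move: unsat_y => /allPn[w /mapP[j]]; rewrite mem_iota => /= j_k ->.
rewrite negb_imply => /andP[/primitiveP prim_yj new_yj].
case: j j_k prim_yj new_yj => [|j] j_k prim_yj new_yj; first by case: nprim_y0.
have range_j : 0 < j.+1 < k by rewrite add0n in j_k.
case/negP: (unsaturated_zeros size_y word_y nprim_y0 range_j prim_yj new_yj).
exact: saturated_zeros.
Qed.

End Terminal.

End GreedyPrimitive.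

Theorem proposition1 (k n : nat) (hk : 2 <= k) (hn : 1 <= n) :
  exists (out : seq nat) (D : seq (seq nat)),
    uniq D /\
    (forall w, w \in D <-> (size w = n /\ word_over k w /\ primitive w)) /\
    reachable k n out /\ terminal k n out /\
    size out = size D + n - 1 /\
    (forall w, size w = n -> word_over k w -> primitive w -> factor w out).
Proof.
have [out [reach_out term_out]] := greedy_terminates hk hn.
have inv_out := greedy_inv_reachable hk hn reach_out.
have factor_out w : size w = n -> word_over k w -> primitive w -> factor w out.
  case/lastP: w => [/= n0|x j]; first by rewrite -n0 in hn.
  rewrite size_rcons /word_over all_rcons => size_xj /andP[j_k word_x] /primitiveP prim_xj.
  have size_x : size x = n.-1 by rewrite -size_xj.
  have /allP/(_ (rcons x j)) := saturated_terminal hk hn inv_out term_out size_x word_x.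
  by rewrite mem_out_edges j_k eqxx prim_xj => /(_ isT).
exists out, (primitive_words k n); split; first exact: uniq_primitive_words.
split; first exact: mem_primitive_words.
do 2 (split=> //); split; last exact: factor_out.
rewrite (greedy_length inv_out) (eq_in_count (a2 := predT)) ?count_predT.
  by rewrite addnC -addnBA // subn1.
by move=> w /mem_primitive_words[size_w [word_w prim_w]]; apply: factor_out.
Qed.
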